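(* The function $g(x)=\dfrac{\exp(H(x))\log(H(x))}{x}$ is increasing on $[4,\infty)$.
   Context: $H(x)=\int_0^1\frac{t^x-1}{t-1}\,dt$ for real $x\ge1$; it is smooth, satisfies $H(n)=1+\frac12+\cdots+\frac1n$ for $n\in\mathbb{N}$, and $H(x)=\psi(x+1)+\gamma$ with $\psi=\Gamma'/\Gamma$ the digamma function. *)

From Stdlib Require Import Reals.
From Coquelicot Require Import Coquelicot.
Open Scope R_scope.

(* Integrand (t^x - 1)/(t - 1); its values at the endpoints t = 0 and t = 1
   (where Rpower / the quotient are not meaningful) do not affect the
   Riemann integral. *)
Definition H_integrand (x t : R) : R := (Rpower t x - 1) / (t - 1).

Definition H (x : R) : R := RInt (H_integrand x) 0 1.

Definition g (x : R) : R := exp (H x) * ln (H x) / x.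

From Stdlib Require Import Reals Lra Lia Psatz.
From Coquelicot Require Import Coquelicot.
Open Scope R_scope.

(* The functional equation H(x+1) = H(x) + 1/(x+1) and the pointwise bound
   (t^x - t^(x+d)) / (1 - t) >= d t^(x+d) give, without differentiating H,
   H(x+d) - H(x) >= d/(x+d+1).  Write ln g = H + ln ln H - ln x.  A step
   0 < d < 1/100 raises ln x by at most d/x, while H gains some D >= d/(x+d+1)
   and ln ln H gains at least D / (H (H - 1)); the gain wins as soon as
   (1 + d) H (H - 1) < x, which the functional equation and H(6) = 49/20
   guarantee for x >= 4.  Chaining small steps gives monotonicity. *)

Lemma ln_le_sub_1 v : 0 < v -> ln v <= v - 1.
Proof.
  intros Hv. assert (E := exp_ineq1_le (ln v)). rewrite exp_ln in E by exact Hv. lra.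
Qed.

Lemma ln_sub_le_div u v : 0 < u -> 0 < v -> ln v - ln u <= (v - u) / u.
Proof.
  intros Hu Hv. rewrite <- ln_div by assumption.
  replace ((v - u) / u) with (v / u - 1) by (field; lra).
  apply ln_le_sub_1, Rdiv_lt_0_compat; assumption.
Qed.

Lemma Rpower_pos t c : 0 < Rpower t c.
Proof. apply exp_pos. Qed.

Lemma Rpower_1_base c : Rpower 1 c = 1.
Proof. unfold Rpower. rewrite ln_1, Rmult_0_r. apply exp_0. Qed.

Lemma Rpower_lt_small_base c e t :
  0 < c -> 0 < e -> 0 < t -> t < exp (ln e / c) -> Rpower t c < e.
Proof.
  intros Hc He Ht Hlt. unfold Rpower. rewrite <- (exp_ln e He).
  apply exp_increasing. apply ln_increasing in Hlt; [|exact Ht].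
  rewrite ln_exp in Hlt. apply (Rmult_lt_compat_l c) in Hlt; [|exact Hc].
  replace (c * (ln e / c)) with (ln e) in Hlt by (field; lra). lra.
Qed.

(* [Rpower 0 c = 1] because [ln 0 = 0]; cutting the power off at [t <= 0]
   makes it continuous on all of [R] when [c > 0]. *)
Definition pos_pow (c t : R) : R := if Rlt_dec 0 t then Rpower t c else 0.

Lemma pos_pow_pos c t : 0 < t -> pos_pow c t = Rpower t c.
Proof. intros; unfold pos_pow; destruct Rlt_dec; lra. Qed.

Lemma pos_pow_nonpos c t : t <= 0 -> pos_pow c t = 0.
Proof. intros; unfold pos_pow; destruct Rlt_dec; lra. Qed.

Lemma pos_pow_ge0 c t : 0 <= pos_pow c t.
Proof. unfold pos_pow; destruct Rlt_dec; [left; apply Rpower_pos|lra]. Qed.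

Lemma pos_pow_succ c t : 0 < t -> pos_pow (c + 1) t = t * pos_pow c t.
Proof.
  intros Ht. rewrite !pos_pow_pos by exact Ht.
  rewrite Rpower_plus, Rpower_1 by exact Ht. ring.
Qed.

Lemma pos_pow_small c e t :
  0 < c -> 0 < e -> Rabs t < exp (ln e / c) -> pos_pow c t < e.
Proof.
  intros Hc He Ht. destruct (Rlt_dec 0 t) as [Hpos|Hnpos].
  - rewrite pos_pow_pos by exact Hpos. rewrite Rabs_pos_eq in Ht by lra.
    apply Rpower_lt_small_base; assumption.
  - rewrite pos_pow_nonpos by lra. exact He.
Qed.

Lemma continuity_pt_pos_pow c t : 0 < c -> continuity_pt (pos_pow c) t.
Proof.
  intros Hc. destruct (Rtotal_order t 0) as [Hneg|[->|Hpos]].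
  - apply continuity_pt_ext_loc with (f := fun _ => 0).
    + generalize (open_lt 0 t Hneg). apply filter_imp. intros u Hu.
      symmetry. apply pos_pow_nonpos. lra.
    + apply continuity_pt_const. intros a b; reflexivity.
  - intros e He. exists (exp (ln e / c)). split; [apply exp_pos|].
    intros u [_ Hu]. change (Rabs (u - 0) < exp (ln e / c)) in Hu.
    change (Rabs (pos_pow c u - pos_pow c 0) < e).
    rewrite Rminus_0_r in Hu. rewrite (pos_pow_nonpos c 0), Rminus_0_r by lra.
    rewrite Rabs_pos_eq by apply pos_pow_ge0. apply pos_pow_small; assumption.
  - apply continuity_pt_ext_loc with (f := fun u => Rpower u c).
    + generalize (open_gt 0 t Hpos). apply filter_imp. intros u Hu.
      symmetry. apply pos_pow_pos. exact Hu.
    + apply derivable_continuous_pt. exists (c * Rpower t (c - 1)).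
      apply derivable_pt_lim_power. exact Hpos.
Qed.

Lemma is_derive_pos_pow_succ c t : 0 < c -> 0 <= t ->
  is_derive (fun u => pos_pow (c + 1) u / (c + 1)) t (pos_pow c t).
Proof.
  intros Hc [Ht|<-].
  - apply is_derive_ext_loc with (f := fun u => / (c + 1) * Rpower u (c + 1)).
    + generalize (open_gt 0 t Ht). apply filter_imp. intros u Hu.
      rewrite pos_pow_pos by exact Hu. apply Rmult_comm.
    + rewrite pos_pow_pos by exact Ht.
      replace (Rpower t c) with (/ (c + 1) * ((c + 1) * Rpower t (c + 1 - 1))).
      2:{ replace (c + 1 - 1) with c by ring. field. lra. }
      apply (is_derive_scal (fun u => Rpower u (c + 1))).
      apply is_derive_Reals, derivable_pt_lim_power. exact Ht.
  - apply is_derive_Reals. intros e He.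
    exists (mkposreal _ (exp_pos (ln e / c))). intros h Hh0 Hh. simpl in Hh.
    rewrite Rplus_0_l, !(pos_pow_nonpos _ 0) by lra.
    destruct (Rlt_dec 0 h) as [Hpos|Hnpos].
    + rewrite pos_pow_succ by exact Hpos.
      replace ((h * pos_pow c h / (c + 1) - 0 / (c + 1)) / h - 0)
        with (pos_pow c h / (c + 1)) by (field; lra).
      assert (Hge := pos_pow_ge0 c h).
      rewrite Rabs_pos_eq by (apply Rdiv_le_0_compat; lra).
      apply Rle_lt_trans with (pos_pow c h); [|apply pos_pow_small; assumption].
      apply Rmult_le_reg_r with (c + 1); [lra|].
      replace (pos_pow c h / (c + 1) * (c + 1)) with (pos_pow c h) by (field; lra).
      nra.
    + rewrite pos_pow_nonpos by lra.
      replace ((0 / (c + 1) - 0 / (c + 1)) / h - 0) with 0 by (unfold Rdiv; ring).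
      rewrite Rabs_R0. exact He.
Qed.

Lemma is_RInt_pos_pow c : 0 < c -> is_RInt (pos_pow c) 0 1 (1 / (c + 1)).
Proof.
  intros Hc.
  replace (1 / (c + 1)) with
    (minus (pos_pow (c + 1) 1 / (c + 1)) (pos_pow (c + 1) 0 / (c + 1))).
  2:{ rewrite pos_pow_pos, pos_pow_nonpos, Rpower_1_base by lra.
      unfold minus, plus, opp; simpl. field. lra. }
  apply (is_RInt_derive (fun u => pos_pow (c + 1) u / (c + 1))).
  - intros t Ht. rewrite Rmin_left, Rmax_right in Ht by lra.
    apply is_derive_pos_pow_succ; lra.
  - intros t _. apply continuity_pt_filterlim, continuity_pt_pos_pow. exact Hc.
Qed.

(* The continuous extension of [H_integrand x] to all of [R]: the removable
   singularity at [t = 1] gets its limit [x], and the value at [t = 0] is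
   fixed through [pos_pow]. *)
Definition H_kernel (x t : R) : R :=
  if Req_EM_T t 1 then x else (1 - pos_pow x t) / (1 - t).

Lemma continuity_pt_H_kernel_1 x : continuity_pt (H_kernel x) 1.
Proof.
  intros e He.
  destruct (derivable_pt_lim_power 1 x Rlt_0_1 e He) as [del Hd].
  exists (Rmin del (/ 2)). split; [apply Rmin_pos; [apply cond_pos|lra]|].
  intros y [_ Hy]. change (Rabs (y - 1) < Rmin del (/ 2)) in Hy.
  change (Rabs (H_kernel x y - H_kernel x 1) < e).
  assert (H1 := Rmin_l del (/ 2)). assert (H2 := Rmin_r del (/ 2)).
  assert (Hy2 := Rabs_def2 _ _ Hy).
  unfold H_kernel. destruct (Req_EM_T 1 1) as [_|]; [|congruence].
  destruct (Req_EM_T y 1) as [_|Hy1].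
  - rewrite Rminus_diag, Rabs_R0. exact He.
  - specialize (Hd (y - 1) ltac:(lra) ltac:(lra)).
    rewrite (Rplus_minus 1 y) in Hd.
    rewrite !Rpower_1_base, Rmult_1_r in Hd.
    rewrite pos_pow_pos by lra.
    replace ((1 - Rpower y x) / (1 - y)) with ((Rpower y x - 1) / (y - 1))
      by (field; lra).
    exact Hd.
Qed.

Lemma continuity_pt_H_kernel x t : 0 < x -> continuity_pt (H_kernel x) t.
Proof.
  intros Hx. destruct (Req_dec t 1) as [->|Ht]; [apply continuity_pt_H_kernel_1|].
  apply continuity_pt_ext_loc with (f := fun u => (1 - pos_pow x u) / (1 - u)).
  - assert (Hne : locally t (fun u => u <> 1)).
    { destruct (Rlt_or_le t 1) as [Hl|Hl].
      - generalize (open_lt 1 t Hl). apply filter_imp. intros u Hu. lra.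
      - generalize (open_gt 1 t ltac:(lra)). apply filter_imp. intros u Hu. lra. }
    generalize Hne. apply filter_imp. intros u Hu.
    unfold H_kernel. destruct Req_EM_T; [contradiction|reflexivity].
  - apply continuity_pt_div; [| |lra].
    + apply continuity_pt_minus; [apply continuity_pt_const; intros a b; reflexivity|].
      apply continuity_pt_pos_pow. exact Hx.
    + apply continuity_pt_minus; [apply continuity_pt_const; intros a b; reflexivity|].
      apply derivable_continuous_pt, derivable_pt_id.
Qed.

Lemma ex_RInt_H_kernel x : 0 < x -> ex_RInt (H_kernel x) 0 1.
Proof.
  intros Hx. apply (@ex_RInt_continuous R_CompleteNormedModule). intros t _.
  apply continuity_pt_filterlim, continuity_pt_H_kernel. exact Hx.
Qed.

Lemma H_kernel_inside x t : 0 < t < 1 ->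
  H_kernel x t = (1 - Rpower t x) / (1 - t).
Proof.
  intros Ht. unfold H_kernel. destruct Req_EM_T; [lra|].
  rewrite pos_pow_pos by lra. reflexivity.
Qed.

Lemma H_RInt_kernel x : H x = RInt (H_kernel x) 0 1.
Proof.
  unfold H. apply RInt_ext. intros t Ht.
  rewrite Rmin_left, Rmax_right in Ht by lra.
  rewrite H_kernel_inside by exact Ht. unfold H_integrand. simpl. field. lra.
Qed.

Lemma H_1 : H 1 = 1.
Proof.
  unfold H. rewrite (RInt_ext (V := R_CompleteNormedModule) _ (fun _ => 1)).
  - rewrite RInt_const. change ((1 - 0) * 1 = 1). ring.
  - intros t Ht. rewrite Rmin_left, Rmax_right in Ht by lra.
    unfold H_integrand. rewrite Rpower_1 by lra.
    change ((t - 1) / (t - 1) = 1). field. lra.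
Qed.

Lemma H_succ x : 0 < x -> H (x + 1) = H x + 1 / (x + 1).
Proof.
  intros Hx. rewrite !H_RInt_kernel.
  rewrite <- (is_RInt_unique _ _ _ _ (is_RInt_pos_pow x Hx)).
  rewrite (RInt_ext (V := R_CompleteNormedModule) (H_kernel (x + 1))
             (fun t => H_kernel x t + pos_pow x t)).
  - apply (RInt_plus (V := R_CompleteNormedModule)).
    + apply ex_RInt_H_kernel. exact Hx.
    + eexists. apply is_RInt_pos_pow. exact Hx.
  - intros t Ht. rewrite Rmin_left, Rmax_right in Ht by lra.
    rewrite !H_kernel_inside by exact Ht. rewrite pos_pow_pos by lra.
    rewrite Rpower_plus, Rpower_1 by lra.
    change ((1 - Rpower t x * t) / (1 - t) = (1 - Rpower t x) / (1 - t) + Rpower t x).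
    field. lra.
Qed.

(* [t^(-d) = exp (- d ln t) >= 1 - d ln t >= 1 + d (1 - t)]. *)
Lemma Rpower_mul_one_add_le t d : 0 < t -> 0 <= d ->
  Rpower t d * (1 + d * (1 - t)) <= 1.
Proof.
  intros Ht Hd.
  assert (Hinv : Rpower t d * exp (- (d * ln t)) = 1).
  { unfold Rpower. rewrite <- exp_plus, Rplus_opp_r. apply exp_0. }
  assert (Hlow : 1 + d * (1 - t) <= exp (- (d * ln t))).
  { assert (E := exp_ineq1_le (- (d * ln t))).
    assert (d * ln t <= d * (t - 1))
      by (apply Rmult_le_compat_l; [exact Hd|apply ln_le_sub_1, Ht]).
    lra. }
  apply Rle_trans with (Rpower t d * exp (- (d * ln t))); [|lra].
  apply Rmult_le_compat_l; [left; apply Rpower_pos|exact Hlow].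
Qed.

Lemma H_sub_ge x d : 0 < x -> 0 < d -> d / (x + d + 1) <= H (x + d) - H x.
Proof.
  intros Hx Hd. rewrite !H_RInt_kernel.
  assert (Iscal : is_RInt (fun t => d * pos_pow (x + d) t) 0 1 (d * (1 / (x + d + 1)))).
  { apply (is_RInt_scal (V := R_CompleteNormedModule)), is_RInt_pos_pow. lra. }
  assert (Idiff : is_RInt (fun t => H_kernel (x + d) t - H_kernel x t) 0 1
                    (RInt (H_kernel (x + d)) 0 1 - RInt (H_kernel x) 0 1)).
  { apply (is_RInt_minus (V := R_CompleteNormedModule));
      apply RInt_correct, ex_RInt_H_kernel; lra. }
  replace (d / (x + d + 1)) with (d * (1 / (x + d + 1))) by (field; lra).
  rewrite <- (is_RInt_unique _ _ _ _ Iscal), <- (is_RInt_unique _ _ _ _ Idiff).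
  apply RInt_le; [lra|eexists; exact Iscal|eexists; exact Idiff|].
  intros t Ht. rewrite pos_pow_pos, !H_kernel_inside by lra.
  assert (Hk := Rpower_mul_one_add_le t d ltac:(lra) ltac:(lra)).
  assert (Hp := Rpower_pos t x).
  rewrite Rpower_plus.
  apply Rmult_le_reg_r with (1 - t); [lra|].
  replace (((1 - Rpower t x * Rpower t d) / (1 - t) - (1 - Rpower t x) / (1 - t)) * (1 - t))
    with (Rpower t x * (1 - Rpower t d)) by (field; lra).
  nra.
Qed.

Lemma H_le x y : 0 < x -> x <= y -> H x <= H y.
Proof.
  intros Hx [Hxy|<-]; [|lra].
  assert (Hs := H_sub_ge x (y - x) Hx ltac:(lra)).
  replace (x + (y - x)) with y in Hs by ring.
  assert (0 <= (y - x) / (y + 1)) by (apply Rdiv_le_0_compat; lra).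
  lra.
Qed.

Lemma H_2 : H 2 = 3 / 2.
Proof. replace 2 with (1 + 1) by ring. rewrite H_succ, H_1 by lra. field. Qed.

Lemma H_3 : H 3 = 11 / 6.
Proof. replace 3 with (2 + 1) by ring. rewrite H_succ, H_2 by lra. field. Qed.

Lemma H_4 : H 4 = 25 / 12.
Proof. replace 4 with (3 + 1) by ring. rewrite H_succ, H_3 by lra. field. Qed.

Lemma H_5 : H 5 = 137 / 60.
Proof. replace 5 with (4 + 1) by ring. rewrite H_succ, H_4 by lra. field. Qed.

Lemma H_6 : H 6 = 49 / 20.
Proof. replace 6 with (5 + 1) by ring. rewrite H_succ, H_5 by lra. field. Qed.

Lemma H_ge_1 x : 1 <= x -> 1 <= H x.
Proof. intros Hx. rewrite <- H_1. apply H_le; lra. Qed.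

Lemma R_ind_step1 (P : R -> Prop) (x0 : R) :
  (forall x, x0 <= x <= x0 + 1 -> P x) ->
  (forall x, x0 <= x -> P x -> P (x + 1)) ->
  forall x, x0 <= x -> P x.
Proof.
  intros Hbase Hstep.
  assert (Hn : forall (n : nat) x, x0 <= x <= x0 + INR n + 1 -> P x).
  { induction n as [|n IH]; intros x Hx.
    - apply Hbase. simpl in Hx. lra.
    - rewrite S_INR in Hx. destruct (Rle_dec x (x0 + INR n + 1)).
      + apply IH. lra.
      + assert (Hn0 := pos_INR n). replace x with ((x - 1) + 1) by ring.
        apply Hstep; [lra|apply IH; lra]. }
  intros x Hx. destruct (archimed (x - x0)) as [Hup _].
  destruct (IZN (up (x - x0))) as [n Hn']; [apply le_IZR; simpl; lra|].
  rewrite Hn', <- INR_IZR_INZ in Hup. apply (Hn n). lra.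
Qed.

Lemma H_le_affine z : 2 <= z -> H z <= z / 3 + 7 / 6.
Proof.
  revert z. apply R_ind_step1.
  - intros x Hx. assert (Hm : H x <= H 3) by (apply H_le; lra).
    rewrite H_3 in Hm. lra.
  - intros x Hx IH. rewrite H_succ by lra.
    assert (1 / (x + 1) <= 1 / 3) by (apply Rmult_le_reg_r with (3 * (x + 1)); [lra|];
                                     field_simplify; lra).
    lra.
Qed.

Lemma H_succ_quadratic_lt x : 4 <= x -> 101 * (H (x + 1) * (H (x + 1) - 1)) < 100 * x.
Proof.
  revert x. apply R_ind_step1.
  - intros x Hx. assert (Hm : H (x + 1) <= H 6) by (apply H_le; lra).
    rewrite H_6 in Hm. assert (Hg : 1 <= H (x + 1)) by (apply H_ge_1; lra).
    nra.
  - intros x Hx IH. rewrite (H_succ (x + 1)) by lra.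
    assert (Ha := H_le_affine (x + 1) ltac:(lra)).
    assert (Hg := H_ge_1 (x + 1) ltac:(lra)).
    set (h := H (x + 1)) in *. set (a := 1 / (x + 1 + 1)).
    assert (Ha1 : a * (x + 2) = 1) by (unfold a; field; lra).
    assert (Ha0 : 0 < a) by (unfold a; apply Rdiv_lt_0_compat; lra).
    assert (Ha6 : a <= 1 / 6) by nra.
    nra.
Qed.

Lemma ln_ln_sub_ge a b : 1 < a -> a <= b ->
  (b - a) / (b * (b - 1)) <= ln (ln b) - ln (ln a).
Proof.
  intros Ha Hab.
  assert (La : 0 < ln a) by (rewrite <- ln_1; apply ln_increasing; lra).
  assert (Lab : ln a <= ln b) by (apply ln_le; lra).
  assert (Lb_le := ln_le_sub_1 b ltac:(lra)).
  assert (S1 := ln_sub_le_div b a ltac:(lra) ltac:(lra)).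
  assert (S2 := ln_sub_le_div (ln b) (ln a) ltac:(lra) La).
  assert (Hba : 0 <= (b - a) / b) by (apply Rdiv_le_0_compat; lra).
  replace ((b - a) / (b * (b - 1))) with ((b - a) / b / (b - 1)) by (field; lra).
  apply Rle_trans with ((b - a) / b / ln b).
  - apply Rmult_le_compat_l; [exact Hba|]. apply Rinv_le_contravar; lra.
  - apply Rle_trans with ((ln b - ln a) / ln b); [|lra].
    apply Rmult_le_compat_r; [left; apply Rinv_0_lt_compat; lra|].
    replace ((a - b) / b) with (- ((b - a) / b)) in S1 by (field; lra). lra.
Qed.

Lemma g_eq_exp x : 0 < x -> 1 < H x -> g x = exp (H x + ln (ln (H x)) - ln x).
Proof.
  intros Hx Hh. unfold g, Rminus. rewrite !exp_plus, exp_Ropp.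
  assert (0 < ln (H x)) by (rewrite <- ln_1; apply ln_increasing; lra).
  rewrite !exp_ln by lra. unfold Rdiv. ring.
Qed.

Lemma div_lt_add_div x d K D : 0 < x -> 0 < d -> 0 < K -> (1 + d) * K < x ->
  d / (x + d + 1) <= D -> d / x < D + D / K.
Proof.
  intros Hx Hd HK Hlt HD.
  apply Rlt_le_trans with (d / (x + d + 1) + d / (x + d + 1) / K).
  - apply Rmult_lt_reg_r with (x * (x + d + 1) * K); [apply Rmult_lt_0_compat; nra|].
    replace (d / x * (x * (x + d + 1) * K)) with (d * (x + d + 1) * K) by (field; lra).
    replace ((d / (x + d + 1) + d / (x + d + 1) / K) * (x * (x + d + 1) * K))
      with (d * x * K + d * x) by (field; lra).
    nra.
  - apply Rplus_le_compat; [exact HD|].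
    apply Rmult_le_compat_r; [left; apply Rinv_0_lt_compat|]; lra.
Qed.

Lemma g_lt_small_step x d : 4 <= x -> 0 < d < 1 / 100 -> g x < g (x + d).
Proof.
  intros Hx Hd.
  assert (Ha : H 4 <= H x) by (apply H_le; lra). rewrite H_4 in Ha.
  assert (Hab := H_le x (x + d) ltac:(lra) ltac:(lra)).
  assert (Hbound : 101 * (H (x + d) * (H (x + d) - 1)) < 100 * x).
  { assert (Hb1 := H_le (x + d) (x + 1) ltac:(lra) ltac:(lra)).
    assert (HQ := H_succ_quadratic_lt x Hx). nra. }
  assert (Hgain := div_lt_add_div x d (H (x + d) * (H (x + d) - 1)) (H (x + d) - H x)
                     ltac:(lra) ltac:(lra) ltac:(nra) ltac:(nra)
                     (H_sub_ge x d ltac:(lra) ltac:(lra))).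
  assert (Hlnx := ln_sub_le_div x (x + d) ltac:(lra) ltac:(lra)).
  replace (x + d - x) with d in Hlnx by ring.
  assert (Hlnln := ln_ln_sub_ge (H x) (H (x + d)) ltac:(lra) Hab).
  rewrite !g_eq_exp by lra. apply exp_increasing. lra.
Qed.

Lemma lt_of_small_steps (f : R -> R) (a e : R) : 0 < e ->
  (forall x d, a <= x -> 0 < d < e -> f x < f (x + d)) ->
  forall x y, a <= x -> x < y -> f x < f y.
Proof.
  intros He Hstep x y Hx Hxy.
  destruct (archimed ((y - x) / e)) as [Hup _].
  assert (Hq : 0 < (y - x) / e) by (apply Rdiv_lt_0_compat; lra).
  destruct (IZN (up ((y - x) / e))) as [n Hn]; [apply le_IZR; simpl; lra|].
  rewrite Hn, <- INR_IZR_INZ in Hup.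
  assert (HN : 0 < INR (S n)) by (apply lt_0_INR; lia).
  set (d := (y - x) / INR (S n)).
  assert (Hd : 0 < d) by (apply Rdiv_lt_0_compat; lra).
  assert (Hde : d < e).
  { assert (Hyx : y - x = (y - x) / e * e) by (field; lra).
    assert (y - x < e * INR (S n)) by (rewrite S_INR; nra).
    apply Rmult_lt_reg_r with (INR (S n)); [exact HN|].
    unfold d. replace ((y - x) / INR (S n) * INR (S n)) with (y - x) by (field; lra).
    lra. }
  assert (Hk : forall k : nat, f x < f (x + INR (S k) * d)).
  { induction k as [|k IH].
    - rewrite Rmult_1_l. apply Hstep; lra.
    - rewrite S_INR, Rmult_plus_distr_r, Rmult_1_l, <- Rplus_assoc.
      apply Rlt_trans with (f (x + INR (S k) * d)); [exact IH|].
      apply Hstep; [|lra].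
      assert (0 <= INR (S k) * d) by (apply Rmult_le_pos; [apply pos_INR|lra]). lra. }
  specialize (Hk n). unfold d in Hk.
  replace (x + INR (S n) * ((y - x) / INR (S n))) with y in Hk by (field; lra).
  exact Hk.
Qed.

Theorem mainTheorem17 :
  forall x y : R, 4 <= x -> x < y -> g x < g y.
Proof.
  apply (lt_of_small_steps g 4 (1 / 100)); [lra|].
  intros x d Hx Hd. apply g_lt_small_step; assumption.
Qed.
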